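(* Let $\mathbf{A}$ be a 4-dimensional cyclic Leibniz algebra over $\mathbb{C}$. Then $\mathbf{A}$ is isomorphic to a Leibniz algebra with basis $\{a,a^2,a^3,a^4\}$, where $aa^i=a^{i+1}$ for $1\le i\le 3$, $a^iv=0$ for $i\ge2$ and all $v$, and $aa^4$ is given by one and only one of the following: (1) $aa^4=0$; (2) $aa^4=a^4$; (3) $aa^4=a^3+\alpha_4a^4$ with $\alpha_4\in\mathbb{C}/\sim$, where $\alpha\sim\alpha'$ iff $\alpha'=\pm\alpha$; (4) $aa^4=a^2+\alpha_3a^3+\alpha_4a^4$ with $(\alpha_3,\alpha_4)\in\mathbb{C}^2/\sim$, where $(\alpha,\beta)\sim(\alpha',\beta')$ iff $(\alpha',\beta')\in\{(\alpha,\beta),(\omega^2\alpha,\omega\beta),(\omega\alpha,\omega^2\beta)\}$ with $\omega=e^{2\pi i/3}$. Here ''one and only one'' means that algebras from different cases are non-isomorphic, and within case (3) (resp. (4)) two parameter values give isomorphic algebras iff they are equivalent under the stated relation $\sim$.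
   Context: A (left) Leibniz algebra is a vector space with a bilinear product such that $x(yz)=(xy)z+y(xz)$ for all $x,y,z$. A cyclic Leibniz algebra is a Leibniz algebra generated by a single element. For an element $x$ set $x^1=x$ and $x^{j+1}=x\,x^j$. *)

(* The complex numbers are modelled as R[i] = complex R
   for an arbitrary R : realType (any realType is the real numbers). *)
From HB Require Import structures.
From mathcomp Require Import all_boot all_order all_algebra.
From mathcomp Require Import reals.
From mathcomp Require Import complex.
Set Implicit Arguments. Unset Strict Implicit. Unset Printing Implicit Defensive.
Import Order.TTheory GRing.Theory Num.Theory.
Local Open Scope ring_scope.

Section LeibnizDefs.
Variable K : fieldType.

Definition bilinear_prod (V : lmodType K) (mul : V -> V -> V) : Prop :=
  (forall (k : K) (u v w : V), mul (k *: u + v) w = k *: mul u w + mul v w) /\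
  (forall (k : K) (u v w : V), mul w (k *: u + v) = k *: mul w u + mul w v).

Definition left_leibniz (V : lmodType K) (mul : V -> V -> V) : Prop :=
  forall x y z : V, mul x (mul y z) = mul (mul x y) z + mul y (mul x z).

Definition leibniz_algebra (V : lmodType K) (mul : V -> V -> V) : Prop :=
  bilinear_prod mul /\ left_leibniz mul.

Definition generated_by (V : vectType K) (mul : V -> V -> V) (x : V) : Prop :=
  forall U : {vspace V}, x \in U ->
    (forall u v, u \in U -> v \in U -> mul u v \in U) -> U = fullv.

Definition cyclic_algebra (V : vectType K) (mul : V -> V -> V) : Prop :=
  exists x : V, generated_by mul x.

Definition alg_iso (V W : lmodType K) (mV : V -> V -> V) (mW : W -> W -> W)
  : Prop :=
  exists f : {linear V -> W},
    bijective f /\ forall u v : V, f (mV u v) = mW (f u) (f v).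

(* The model algebras on K^4 with basis e_0 = a, e_1 = a^2, e_2 = a^3,
   e_3 = a^4 (row vectors).  L is the left multiplication by a:
   L e_i = e_(i+1) for i < 3 and L e_3 = c. *)
Definition ebasis (i : 'I_4) : 'rV[K]_4 := delta_mx 0 i.

Definition model_L (c : 'rV[K]_4) : 'M[K]_4 :=
  \matrix_(i < 4) (if (i : nat) == 3%N then c else ebasis (inord i.+1)).

(* product: x y = x_0 * L(y); so a a^i = a^(i+1) (i <= 3), a a^4 = c,
   and a^i v = 0 for i >= 2 *)
Definition model_mul (c : 'rV[K]_4) (x y : 'rV[K]_4) : 'rV[K]_4 :=
  x 0 0 *: (y *m model_L c).

End LeibnizDefs.

Inductive cls (C : Type) : Type :=
| Cls1 : cls C
| Cls2 : cls C
| Cls3 : C -> cls C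
| Cls4 : C -> C -> cls C.

Definition cls_vec (K : fieldType) (k : cls K) : 'rV[K]_4 :=
  match k with
  | Cls1 => 0
  | Cls2 => ebasis K 3
  | Cls3 a4 => ebasis K 2 + a4 *: ebasis K 3
  | Cls4 a3 a4 => ebasis K 1 + a3 *: ebasis K 2 + a4 *: ebasis K 3
  end.

(* omega = exp(2 pi i / 3) = -1/2 + (sqrt 3 / 2) i *)
Definition omega (R : realType) : R[i] :=
  Complex (- (1 / 2)) (Num.sqrt 3 / 2).

Definition cls_equiv (R : realType) (k k' : cls R[i]) : Prop :=
  match k, k' with
  | Cls1, Cls1 => True
  | Cls2, Cls2 => True
  | Cls3 a, Cls3 a' => a' = a \/ a' = - a
  | Cls4 a b, Cls4 a' b' =>
      (a', b') = (a, b) \/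
      (a', b') = (omega R ^+ 2 * a, omega R * b) \/
      (a', b') = (omega R * a, omega R ^+ 2 * b)
  | _, _ => False
  end.

(* If a generates A, the left Leibniz identity makes every square, and then
   every power a^j with j >= 2, a left annihilator.  Hence the span of
   a, ..., a^j is a subalgebra as soon as a^(j+1) lies in it, so a, a^2, a^3,
   a^4 is a basis and a a^4 = c1 a^2 + c2 a^3 + c3 a^4; the coordinate map is
   then an isomorphism onto the model with parameters (c1, c2, c3).  Replacing
   a by s a turns them into (s^3 c1, s^2 c2, s c3).  Conversely, an
   isomorphism between two models maps a to some u whose a-coordinate t is
   nonzero, and computing u a^4 in the target model (where L^4 is a
   combination of lower powers of L) shows that the parameters differ by this
   rescaling with s = t.  Normalising the first nonzero parameter to 1 by a
   cube or square root gives the four families, and the remaining freedom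
   s^3 = 1, resp. s^2 = 1, is the stated equivalence. *)

From HB Require Import structures.
From mathcomp Require Import all_boot all_order all_algebra.
From mathcomp Require Import reals complex.
From mathcomp Require Import ring.
Set Implicit Arguments. Unset Strict Implicit.
Import GRing.Theory Num.Theory.
Local Open Scope ring_scope.

Section Product.
Variables (K : fieldType) (V : lmodType K) (mul : V -> V -> V).
Hypothesis bil : bilinear_prod mul.

Lemma prodPl k u v w : mul (k *: u + v) w = k *: mul u w + mul v w.
Proof. by case: bil => H _; apply: H. Qed.

Lemma prodPr k u v w : mul w (k *: u + v) = k *: mul w u + mul w v.
Proof. by case: bil => _ H; apply: H. Qed.

Lemma prod0l w : mul 0 w = 0.
Proof.
by have := prodPl 1 0 0 w; rewrite !scale1r addr0 -{1}[mul 0 w]addr0 => /addrI <-.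
Qed.

Lemma prod0r w : mul w 0 = 0.
Proof.
by have := prodPr 1 0 0 w; rewrite !scale1r addr0 -{1}[mul w 0]addr0 => /addrI <-.
Qed.

Lemma prodDl u v w : mul (u + v) w = mul u w + mul v w.
Proof. by rewrite -[u]scale1r prodPl !scale1r. Qed.

Lemma prodDr u v w : mul w (u + v) = mul w u + mul w v.
Proof. by rewrite -[u]scale1r prodPr !scale1r. Qed.

Lemma prodZl k u w : mul (k *: u) w = k *: mul u w.
Proof. by rewrite -[k *: u]addr0 prodPl prod0l addr0. Qed.

Lemma prodZr k u w : mul w (k *: u) = k *: mul w u.
Proof. by rewrite -[k *: u]addr0 prodPr prod0r addr0. Qed.

Lemma prod_suml n (F : 'I_n -> V) w : mul (\sum_i F i) w = \sum_i mul (F i) w.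
Proof. exact: (big_morph (mul^~ w) (fun u v => prodDl u v w) (prod0l w)). Qed.

Lemma prod_sumr n (F : 'I_n -> V) w : mul w (\sum_i F i) = \sum_i mul w (F i).
Proof. exact: (big_morph (mul w) (fun u v => prodDr u v w) (prod0r w)). Qed.

(* [lpow x n] is x^(n+1) in the notation of the statement. *)
Definition lpow (x : V) (n : nat) : V := iter n (mul x) x.

Lemma lpowS x n : lpow x n.+1 = mul x (lpow x n).
Proof. by []. Qed.

Lemma lpowZ k x n : lpow (k *: x) n = k ^+ n.+1 *: lpow x n.
Proof.
elim: n => [|n IHn]; first by rewrite expr1.
by rewrite lpowS IHn prodZl prodZr scalerA -exprS.
Qed.

Definition lann (y : V) : Prop := forall z, mul y z = 0.

Hypothesis leib : left_leibniz mul.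

Lemma lann_sq x : lann (mul x x).
Proof. by move=> z; have := leib x x z; rewrite -{1}[mul x _]add0r => /addIr <-. Qed.

Lemma lann_mulr x w : lann w -> lann (mul x w).
Proof. by move=> Hw z; have := leib x w z; rewrite !Hw prod0r addr0. Qed.

Lemma lann_lpowS x n : lann (lpow x n.+1).
Proof. by elim: n => [|n IHn]; [exact: lann_sq | exact: lann_mulr]. Qed.

End Product.

Lemma lpow_morph (K : fieldType) (V W : lmodType K) (mV : V -> V -> V)
    (mW : W -> W -> W) (f : V -> W) x n :
  (forall u v, f (mV u v) = mW (f u) (f v)) -> f (lpow mV x n) = lpow mW (f x) n.
Proof. by move=> fM; elim: n => // n IHn; rewrite !lpowS fM IHn. Qed.

Lemma memv_span_map (K : fieldType) (V W : vectType K) (F : V -> W)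
    (X : seq V) (U : {vspace W}) :
  (forall k u v, F (k *: u + v) = k *: F u + F v) ->
  (forall y, y \in X -> F y \in U) -> forall u, u \in <<X>>%VS -> F u \in U.
Proof.
move=> linF; have F0 : F 0 = 0.
  by have := linF 1 0 0; rewrite !scale1r addr0 -{1}[F 0]addr0 => /addrI <-.
elim: X => [|y X IHX] FXU u.
  by rewrite span_nil memv0 => /eqP ->; rewrite F0 mem0v.
rewrite span_cons => /memv_addP [_ /vlineP [k ->] [w Xw ->]].
rewrite linF memvD ?memvZ //; first by rewrite FXU ?mem_head.
by apply: IHX Xw => z Xz; rewrite FXU // inE Xz orbT.
Qed.

Section CyclicLeibniz.
Variables (K : fieldType) (V : vectType K) (mul : V -> V -> V).
Hypothesis bil : bilinear_prod mul.
Hypothesis leib : left_leibniz mul.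
Local Notation lpow := (lpow mul).
Local Notation lann := (lann mul).

Lemma generated_by_scale s x :
  s != 0 -> generated_by mul x -> generated_by mul (s *: x).
Proof.
move=> s0 genx U sxU mulU; apply: genx => //.
by rewrite -[x](scalerK s0) memvZ.
Qed.

Definition pows x n : n.-tuple V := [tuple lpow x i | i < n].

Lemma powsE x n : pows x n = mkseq (lpow x) n :> seq V.
Proof. by rewrite /= /mkseq -val_enum_ord -map_comp. Qed.

Lemma nth_pows x n (i : 'I_n) : (pows x n)`_i = lpow x i.
Proof. exact: nth_mktuple. Qed.

Variable x : V.
Hypothesis genx : generated_by mul x.

Lemma span_pows_full n : lpow x n \in <<pows x n>>%VS -> <<pows x n>>%VS = fullv.
Proof.
rewrite powsE /mkseq => xnX.
have lpowX i : (i <= n)%N -> lpow x i \in <<[seq lpow x i | i <- iota 0 n]>>%VS.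
  rewrite leq_eqVlt => /orP [/eqP -> //|ltin].
  by apply: memv_span; apply/mapP; exists i; rewrite ?mem_iota.
apply: genx => [|u v uX vX]; first exact: (lpowX 0%N).
apply: (memv_span_map (F := mul^~ v)) uX => [k u1 u2|w]; first exact: prodPl.
case/mapP => -[|i] _ ->; last by rewrite lann_lpowS // mem0v.
apply: (memv_span_map (F := mul x)) vX => [k v1 v2|z]; first exact: prodPr.
by case/mapP => i; rewrite mem_iota add0n => ltin ->; exact: (lpowX i.+1).
Qed.

Lemma free_pows n : (n <= \dim (fullv : {vspace V}))%N -> free (pows x n).
Proof.
elim: n => [|n IHn] ltn; first by rewrite powsE nil_free.
rewrite powsE mkseqS (perm_free (permEl (perm_rcons _ _))) free_cons.
rewrite -powsE IHn ?(ltnW ltn) // andbT.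
apply/negP => /span_pows_full fullX.
by have := dim_span (pows x n); rewrite fullX size_tuple leqNgt ltn.
Qed.

Lemma basis_pows n : \dim (fullv : {vspace V}) = n -> basis_of fullv (pows x n).
Proof. by move=> dimV; rewrite basisEfree free_pows ?dimV // subvf size_tuple /=. Qed.

Lemma coord_pows0_lann n v :
  \dim (fullv : {vspace V}) = n.+2 -> lann v -> coord (pows x n.+2) 0 v = 0.
Proof.
move=> dimV lann_v; have basisX := basis_pows dimV.
(* right multiplication by x kills every basis vector but x *)
have : mul v x = coord (pows x n.+2) 0 v *: lpow x 1.
  rewrite {1}(coord_basis basisX (memvf v)) (prod_suml bil).
  rewrite big_ord_recl big1 ?addr0 => [|i _]; first by rewrite nth_pows (prodZl bil).
  by rewrite nth_pows lift0 (prodZl bil) (lann_lpowS bil leib) scaler0.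
rewrite (lann_v x) => /esym/eqP; rewrite scaler_eq0 => /orP [/eqP //|].
have : lpow x 1 \in pows x n.+2.
  by rewrite -(nth_pows x (n := n.+2) 1) mem_nth ?size_tuple.
by move=> /(free_not0 (basis_free basisX)) /negPf ->.
Qed.

End CyclicLeibniz.

Section ScaledGenerator.
Variables (K : fieldType) (V : vectType K) (mul : V -> V -> V).
Hypothesis bil : bilinear_prod mul.
Hypothesis leib : left_leibniz mul.
Variable x : V.
Hypothesis genx : generated_by mul x.
Local Notation lpow := (lpow mul).
Local Notation pows := (pows mul).

Lemma coord_lpow_scale s n (j : 'I_n) :
  s != 0 -> \dim (fullv : {vspace V}) = n ->
  coord (pows (s *: x) n) j (lpow (s *: x) n) =
    s ^+ (n - j) * coord (pows x n) j (lpow x n).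
Proof.
move=> s0 dimV; have basisX := basis_pows bil leib genx dimV.
have freeY := basis_free (basis_pows bil leib (generated_by_scale s0 genx) dimV).
rewrite (lpowZ bil) {1}(coord_basis basisX (memvf (lpow x n))) scaler_sumr.
pose a (i : 'I_n) := s ^+ (n - i) * coord (pows x n) i (lpow x n).
rewrite (eq_bigr (fun i => a i *: (pows (s *: x) n)`_i)) ?coord_sum_free //.
move=> i _; rewrite !nth_pows (lpowZ bil) !scalerA; congr (_ *: _).
by rewrite [RHS]mulrAC -exprD addnS subnK 1?ltnW // mulrC.
Qed.

End ScaledGenerator.

Definition coord_row (K : fieldType) (V : vectType K) n (X : n.-tuple V) (v : V) :
  'rV[K]_n := \row_i coord X i v.

Lemma coord_row_is_linear (K : fieldType) (V : vectType K) n (X : n.-tuple V) :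
  linear (coord_row X).
Proof. by move=> k u v; apply/rowP => i; rewrite !mxE linearP. Qed.

HB.instance Definition _ (K : fieldType) (V : vectType K) n (X : n.-tuple V) :=
  GRing.isSemilinear.Build K V 'rV[K]_n _ (coord_row X)
    (GRing.semilinear_linear (coord_row_is_linear X)).

Lemma coord_row_free (K : fieldType) (V : vectType K) n (X : n.-tuple V)
    (i : 'I_n) :
  free X -> coord_row X X`_i = delta_mx 0 i.
Proof. by move=> freeX; apply/rowP => j; rewrite !mxE coord_free // eqxx eq_sym. Qed.

Section CyclicModel.
Variables (K : fieldType) (V : vectType K) (mul : V -> V -> V).
Hypothesis bil : bilinear_prod mul.
Hypothesis leib : left_leibniz mul.
Variable x : V.
Hypothesis genx : generated_by mul x.
Hypothesis dimV : \dim (fullv : {vspace V}) = 4%N.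
Local Notation X := (pows mul x 4).
Local Notation c := (coord_row X (lpow mul x 4)).

Lemma coord_row_mul_pows (i : 'I_4) : coord_row X (mul x X`_i) = row i (model_L c).
Proof.
have freeX := basis_free (basis_pows bil leib genx dimV).
rewrite rowK nth_pows; case: eqP => [i3|i3].
  by rewrite -[mul x _]/(lpow mul x i.+1) i3.
have i_lt3 : (i < 3)%N by rewrite ltn_neqAle (introF eqP i3) -ltnS ltn_ord.
have -> : mul x (lpow mul x i) = X`_(inord i.+1 : 'I_4) by rewrite nth_pows inordK.
exact: coord_row_free.
Qed.

Lemma mul_coord0 u v : mul u v = coord X 0 u *: mul x v.
Proof.
rewrite {1}(coord_basis (basis_pows bil leib genx dimV) (memvf u)) (prod_suml bil).
rewrite big_ord_recl big1 ?addr0 => [|i _]; first by rewrite nth_pows (prodZl bil).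
by rewrite nth_pows lift0 (prodZl bil) (lann_lpowS bil leib) scaler0.
Qed.

Lemma coord_row_lpow4_00 : c 0 0 = 0.
Proof. by rewrite mxE (coord_pows0_lann bil leib genx dimV (lann_lpowS bil leib x 3)). Qed.

Lemma cyclic_iso_model : alg_iso mul (model_mul c).
Proof.
have basisX := basis_pows bil leib genx dimV.
exists (coord_row X : {linear V -> 'rV[K]_4}); split.
  exists (fun r : 'rV[K]_4 => \sum_i r 0 i *: X`_i) => [v|r].
    by rewrite [RHS](coord_basis basisX (memvf v)); apply: eq_bigr => i _; rewrite mxE.
  by apply/rowP => j; rewrite mxE coord_sum_free ?(basis_free basisX).
move=> u v; rewrite mul_coord0 linearZ /model_mul mxE; congr (_ *: _).
rewrite {1}(coord_basis basisX (memvf v)) (prod_sumr bil) linear_sum mulmx_sum_row.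
by apply: eq_bigr => i _; rewrite (prodZr bil) linearZ /= coord_row_mul_pows mxE.
Qed.

End CyclicModel.

(* The parameters of the model after its generator a is replaced by s a. *)
Definition rescale (K : fieldType) (s : K) (c : 'rV[K]_4) : 'rV[K]_4 :=
  \row_j (s ^+ (4 - j) * c 0 j).

Lemma rescale_entries (K : fieldType) (s : K) (c : 'rV[K]_4) :
  [/\ rescale s c 0 0 = s ^+ 4 * c 0 0, rescale s c 0 1 = s ^+ 3 * c 0 1,
       rescale s c 0 2 = s ^+ 2 * c 0 2 & rescale s c 0 3 = s * c 0 3].
Proof. by rewrite !mxE. Qed.

Lemma rescaleK (K : fieldType) (s : K) : s != 0 -> cancel (rescale s) (rescale s^-1).
Proof. by move=> s0 c; apply/rowP => j; rewrite !mxE exprVn mulKf ?expf_neq0. Qed.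

Lemma cyclic_iso_model_rescale (K : fieldType) (V : vectType K) (mul : V -> V -> V) x s :
  leibniz_algebra mul -> generated_by mul x -> \dim (fullv : {vspace V}) = 4%N ->
  s != 0 ->
  alg_iso mul (model_mul (rescale s (coord_row (pows mul x 4) (lpow mul x 4)))).
Proof.
move=> [bil leib] genx dimV s0.
have -> : rescale s (coord_row (pows mul x 4) (lpow mul x 4)) =
          coord_row (pows mul (s *: x) 4) (lpow mul (s *: x) 4).
  by apply/rowP => j; rewrite !mxE coord_lpow_scale.
exact (cyclic_iso_model bil leib (generated_by_scale s0 genx) dimV).
Qed.

Lemma dim_rV4 (K : fieldType) : \dim (fullv : {vspace 'rV[K]_4}) = 4%N.
Proof. by rewrite dimvf /dim /= mul1n. Qed.

Section Model.
Variables (K : fieldType) (c : 'rV[K]_4).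
Local Notation L := (model_L c).
Local Notation mulc := (model_mul c).

Lemma model_bilinear : bilinear_prod mulc.
Proof.
split=> k u v w; rewrite /model_mul.
  by rewrite !mxE scalerDl scalerA.
by rewrite mulmxDl -scalemxAl scalerDr !scalerA mulrC.
Qed.

Lemma ebasis_mulL (i : 'I_4) :
  ebasis K i *m L = if i == 3 :> nat then c else ebasis K (inord i.+1).
Proof. by rewrite -rowE rowK. Qed.

Lemma mulmxXSr m (u : 'rV[K]_4) : u *m L ^+ m.+1 = u *m L ^+ m *m L.
Proof. by rewrite exprSr mulmxA. Qed.

Lemma ebasis_mulLX (i : 'I_4) : ebasis K 0 *m L ^+ i = ebasis K i.
Proof.
case: i => i; elim: i => [|i IHi] lti.
  by rewrite mulmx1; congr ebasis; apply: val_inj.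
rewrite mulmxXSr (IHi (ltnW lti)) ebasis_mulL /= (ltn_eqF (lti : (i < 3)%N)).
by congr ebasis; apply: val_inj; rewrite /= inordK.
Qed.

Lemma ebasis_mulLX4 : ebasis K 0 *m L ^+ 4 = c.
Proof. by rewrite mulmxXSr (ebasis_mulLX 3) ebasis_mulL. Qed.

Lemma model_LX4 : L ^+ 4 = \sum_(j < 4) c 0 j *: L ^+ j.
Proof.
(* Row k is seen by e_k = e_0 L^k; as L^k commutes with both sides, this
   reduces to e_0 L^4 = c = sum_j c_j e_0 L^j. *)
apply/row_matrixP => k; rewrite !rowE -/(ebasis K k) -(ebasis_mulLX k) -!mulmxA.
rewrite !mulmxE -!exprD addnC exprD -mulmxE mulmxA ebasis_mulLX4 {1}(row_sum_delta c).
rewrite mulmx_suml mulmxE mulr_sumr mulmx_sumr; apply: eq_bigr => j _.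
rewrite -/(ebasis K j) -(ebasis_mulLX j) -scalerAr -scalemxAr -scalemxAl -mulmxA.
by rewrite mulmxE -!exprD addnC.
Qed.

Lemma model_lpow u n : lpow mulc u n = u 0 0 ^+ n *: (u *m L ^+ n).
Proof.
elim: n => [|n IHn]; first by rewrite scale1r mulmx1.
by rewrite lpowS IHn /model_mul -scalemxAl scalerA -exprS mulmxXSr.
Qed.

Lemma model_lpow_ebasis (i : 'I_4) : lpow mulc (ebasis K 0) i = ebasis K i.
Proof. by rewrite model_lpow mxE /= expr1n scale1r ebasis_mulLX. Qed.

Lemma model_lpow4_ebasis : lpow mulc (ebasis K 0) 4 = c.
Proof. by rewrite model_lpow mxE /= expr1n scale1r ebasis_mulLX4. Qed.

Lemma model_lpow4 u :
  lpow mulc u 4 = \sum_(j < 4) rescale (u 0 0) c 0 j *: lpow mulc u j.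
Proof.
rewrite model_lpow model_LX4 mulmx_sumr scaler_sumr; apply: eq_bigr => j _.
by rewrite model_lpow mxE -scalemxAr !scalerA [in RHS]mulrAC -exprD subnK // ltnW.
Qed.

Hypothesis c00 : c 0 0 = 0.

Lemma model_mulL00 (u : 'rV[K]_4) : (u *m L) 0 0 = 0.
Proof.
rewrite mxE big1 // => i _; rewrite mxE.
case: eqP => [_|i3]; first by rewrite c00 mulr0.
have lti : (i.+1 < 4)%N by rewrite ltn_neqAle eqSS (introF eqP i3) ltn_ord.
rewrite mxE; have -> : (0 == inord i.+1 :> 'I_4) = false by rewrite -val_eqE /= inordK.
by rewrite andbF mulr0.
Qed.

Lemma model_leibniz : left_leibniz mulc.
Proof.
move=> u v w; rewrite /model_mul.
have -> : (u 0 0 *: (v *m L)) 0 0 = 0 by rewrite mxE model_mulL00 mulr0.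
by rewrite scale0r add0r -!scalemxAl !scalerA mulrC.
Qed.

Lemma model_generated : generated_by mulc (ebasis K 0).
Proof.
move=> U e0U mulU; have lpowU n : lpow mulc (ebasis K 0) n \in U.
  by elim: n => // n IHn; rewrite lpowS mulU.
apply/eqP; rewrite eqEsubv subvf; apply/subvP => v _.
rewrite (row_sum_delta v) memv_suml // => j _.
by rewrite memvZ // -/(ebasis K j) -model_lpow_ebasis.
Qed.

Lemma model_coord_row v : coord_row (pows mulc (ebasis K 0) 4) v = v.
Proof.
have := basis_pows model_bilinear model_leibniz model_generated (dim_rV4 K).
move=> /basis_free freeX; apply/rowP => j; rewrite mxE {1}(row_sum_delta v).
rewrite (eq_bigr (fun i => v 0 i *: (pows mulc (ebasis K 0) 4)`_i)) ?coord_sum_free //.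
by move=> i _; rewrite nth_pows model_lpow_ebasis.
Qed.

Lemma model_iso_rescale_suff s : s != 0 -> alg_iso mulc (model_mul (rescale s c)).
Proof.
move=> s0.
have leibc : leibniz_algebra mulc by split; [exact: model_bilinear | exact: model_leibniz].
have := cyclic_iso_model_rescale leibc model_generated (dim_rV4 K) s0.
by rewrite model_lpow4_ebasis model_coord_row.
Qed.

End Model.

Lemma model_iso_rescale_nec (K : fieldType) (c c' : 'rV[K]_4) :
  alg_iso (model_mul c) (model_mul c') -> exists2 t, t != 0 & c = rescale t c'.
Proof.
move=> [f [[g fK gK] fM]]; set u := f (ebasis K 0).
have f_lpow n : f (lpow (model_mul c) (ebasis K 0) n) = lpow (model_mul c') u n.
  exact: lpow_morph.
exists (u 0 0).
  apply/eqP => u00; have : f (ebasis K 1) = f 0.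
    by rewrite -(model_lpow_ebasis c 1) f_lpow model_lpow u00 expr1 scale0r linear0.
  by move/(can_inj fK)/rowP/(_ 1)/eqP; rewrite !mxE oner_eq0.
apply: (can_inj fK); rewrite -[c in f c](model_lpow4_ebasis c) f_lpow model_lpow4.
rewrite [in RHS](row_sum_delta (rescale _ c')) linear_sum; apply: eq_bigr => j _.
by rewrite linearZ -/(ebasis K j) -(model_lpow_ebasis c j) f_lpow.
Qed.

Lemma model_iso_rescale (K : fieldType) (c c' : 'rV[K]_4) : c 0 0 = 0 ->
  alg_iso (model_mul c) (model_mul c') <-> exists2 s, s != 0 & c' = rescale s c.
Proof.
move=> c00; split=> [/model_iso_rescale_nec [t t0 ->]|[s s0 ->]]; last first.
  exact: model_iso_rescale_suff.
by exists t^-1; rewrite ?invr_eq0 ?rescaleK.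
Qed.

Lemma row4P (K : fieldType) (u v : 'rV[K]_4) :
  u 0 0 = v 0 0 -> u 0 1 = v 0 1 -> u 0 2 = v 0 2 -> u 0 3 = v 0 3 -> u = v.
Proof.
move=> e0 e1 e2 e3; apply/rowP => j.
have : j \in [:: 0; 1; 2; 3] by case: j => -[|[|[|[|//]]]].
by rewrite !inE => /or4P [] /eqP ->.
Qed.

Lemma rescale_ebasis (K : fieldType) (s : K) (c : 'rV[K]_4) : c 0 0 = 0 ->
  rescale s c = (s ^+ 3 * c 0 1) *: ebasis K 1 + (s ^+ 2 * c 0 2) *: ebasis K 2
                + (s * c 0 3) *: ebasis K 3.
Proof.
case: (rescale_entries s c) => e0 e1 e2 e3 c00.
by apply: row4P; rewrite ?e0 ?e1 ?e2 ?e3 !mxE /= ?c00 !mulr0 ?mulr1 ?addr0 ?add0r.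
Qed.

Lemma cls_vec_normal_form (C : numClosedFieldType) (c : 'rV[C]_4) : c 0 0 = 0 ->
  exists k : cls C, exists2 s, s != 0 & cls_vec k = rescale s c.
Proof.
move=> c00.
have [c1|c1] := eqVneq (c 0 1) 0; last first.
  pose s := (3.-root (c 0 1))^-1.
  have s3 : s ^+ 3 * c 0 1 = 1 by rewrite /s exprVn rootCK // mulVf.
  have s0 : s != 0 by rewrite invr_eq0 rootC_eq0.
  exists (Cls4 (s ^+ 2 * c 0 2) (s * c 0 3)), s => //.
  by rewrite rescale_ebasis // s3 scale1r.
have [c2|c2] := eqVneq (c 0 2) 0; last first.
  pose s := (2.-root (c 0 2))^-1.
  have s2 : s ^+ 2 * c 0 2 = 1 by rewrite /s exprVn rootCK // mulVf.
  have s0 : s != 0 by rewrite invr_eq0 rootC_eq0.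
  exists (Cls3 (s * c 0 3)), s => //.
  by rewrite rescale_ebasis // s2 c1 mulr0 scale0r add0r scale1r.
have [c3|c3] := eqVneq (c 0 3) 0.
  exists (Cls1 C), 1; first exact: oner_neq0.
  by rewrite rescale_ebasis // c1 c2 c3 !mulr0 !scale0r !addr0.
exists (Cls2 C), (c 0 3)^-1; first by rewrite invr_eq0.
by rewrite rescale_ebasis // c1 c2 mulVf // !mulr0 !scale0r scale1r !add0r.
Qed.

Lemma rescale_eqP (K : fieldType) (s : K) (c c' : 'rV[K]_4) : c 0 0 = 0 -> c' 0 0 = 0 ->
  c' = rescale s c <->
  [/\ c' 0 1 = s ^+ 3 * c 0 1, c' 0 2 = s ^+ 2 * c 0 2 & c' 0 3 = s * c 0 3].
Proof.
case: (rescale_entries s c) => e0 e1 e2 e3 c00 c'00.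
split=> [->|[c'1 c'2 c'3]]; first by [].
by apply: row4P; rewrite ?e0 ?e1 ?e2 ?e3 // c00 c'00 mulr0.
Qed.

Lemma cls_vec00 (K : fieldType) (k : cls K) : cls_vec k 0 0 = 0.
Proof. by case: k => [||a|a b]; rewrite !mxE /= ?mulr0 ?addr0. Qed.

Lemma cube_eq1 (F : idomainType) (w t : F) :
  w ^+ 2 + w + 1 = 0 -> t ^+ 3 = 1 -> [\/ t = 1, t = w | t = w ^+ 2].
Proof.
move=> w2 t3; have : (t - 1) * (t - w) * (t - w ^+ 2) == 0.
  have -> : (t - 1) * (t - w) * (t - w ^+ 2) =
            t ^+ 3 - 1 - (t - 1) * (t + 1 - w) * (w ^+ 2 + w + 1) by ring.
  by rewrite t3 w2 mulr0 !subrr.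
rewrite !mulf_eq0 !subr_eq0 => /orP [/orP [] | ] /eqP ->;
  by [apply: Or31 | apply: Or32 | apply: Or33].
Qed.

Lemma omega_cubic (R : realType) : omega R ^+ 2 + omega R + 1 = 0.
Proof.
apply/eqP; rewrite expr2 eq_complex /=; apply/andP; split; apply/eqP; last by field.
set q := Num.sqrt (3 : R); have q2 : q ^+ 2 = 3 by rewrite sqr_sqrtr // ler0n.
have -> : - (1 / 2) * - (1 / 2) - q / 2 * (q / 2) - 1 / 2 + 1 = (3 - q ^+ 2) / 4 :> R.
  by field.
by rewrite q2 subrr mul0r.
Qed.

(* [cls_equiv] with omega abstracted to any w; over an abstract field the
   case analysis below cannot trigger computations in R[i]. *)
Definition cls_equiv_at (F : fieldType) (w : F) (k k' : cls F) : Prop :=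
  match k, k' with
  | Cls1, Cls1 | Cls2, Cls2 => True
  | Cls3 a, Cls3 a' => a' = a \/ a' = - a
  | Cls4 a b, Cls4 a' b' =>
      (a', b') = (a, b) \/
      (a', b') = (w ^+ 2 * a, w * b) \/ (a', b') = (w * a, w ^+ 2 * b)
  | _, _ => False
  end.

Lemma cls_vec_entries (K : fieldType) (k : cls K) :
  [/\ cls_vec k 0 1 = (if k is Cls4 _ _ then 1 else 0),
      cls_vec k 0 2 = (match k with Cls3 _ => 1 | Cls4 a _ => a | _ => 0 end)
    & cls_vec k 0 3 = (match k with Cls1 => 0 | Cls2 => 1 | Cls3 b | Cls4 _ b => b end)].
Proof. by case: k => [||a|a b]; rewrite !mxE /= ?mulr0 ?mulr1 ?addr0 ?add0r. Qed.

Lemma cls_equiv_at_rescale (F : fieldType) (w : F) (k k' : cls F) :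
  w ^+ 2 + w + 1 = 0 ->
  cls_equiv_at w k k' <-> exists2 s, s != 0 & cls_vec k' = rescale s (cls_vec k).
Proof.
move=> w_cubic; have w3 : w ^+ 3 = 1.
  have -> : w ^+ 3 = 1 + (w - 1) * (w ^+ 2 + w + 1) by ring.
  by rewrite w_cubic mulr0 addr0.
have w0 : w != 0 by apply: contra_eq_neq w3 => ->; rewrite expr0n eq_sym oner_eq0.
have w4 : (w ^+ 2) ^+ 2 = w by rewrite -exprM exprSr w3 mul1r.
have w6 : (w ^+ 2) ^+ 3 = 1 by rewrite -exprM mulnC exprM w3 expr1n.
have resc s k1 k2 : cls_vec k2 = rescale s (cls_vec k1) <->
    [/\ cls_vec k2 0 1 = s ^+ 3 * cls_vec k1 0 1,
        cls_vec k2 0 2 = s ^+ 2 * cls_vec k1 0 2 & cls_vec k2 0 3 = s * cls_vec k1 0 3].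
  exact: rescale_eqP (cls_vec00 k1) (cls_vec00 k2).
split.
  case: k k' => [||a|a b] [||a'|a' b'] //.
  - by move=> _; exists 1; rewrite ?oner_eq0 //; apply/resc; rewrite !mxE /=; split; ring.
  - by move=> _; exists 1; rewrite ?oner_eq0 //; apply/resc; rewrite !mxE /=; split; ring.
  - by move=> [->|->]; [exists 1 | exists (-1)]; rewrite ?oppr_eq0 ?oner_eq0 //;
      apply/resc; rewrite !mxE /=; split; ring.
  - by move=> [[-> ->]|[[-> ->]|[-> ->]]]; [exists 1 | exists w | exists (w ^+ 2)];
      rewrite ?oner_eq0 ?expf_neq0 //; apply/resc; rewrite !mxE /= ?w3 ?w4 ?w6; split; ring.
case=> s s0 /resc; have sX n : s ^+ n != 0 := expf_neq0 n s0.
case: (cls_vec_entries k) (cls_vec_entries k') => -> -> -> [-> -> ->].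
case: k k' => [||a|a b] [||a'|a' b'] /=; rewrite ?(mulr0, mulr1) => -[e1 e2 e3] //;
  try by move/eqP: e1; rewrite ?oner_eq0 // eq_sym ?(negPf s0) ?(negPf (sX _)).
all: try by move/eqP: e2; rewrite ?oner_eq0 // eq_sym ?(negPf s0) ?(negPf (sX _)).
all: try by move/eqP: e3; rewrite ?oner_eq0 // eq_sym ?(negPf s0) ?(negPf (sX _)).
  move/esym/eqP: e2; rewrite sqrf_eq1 e3 => /orP [] /eqP ->;
  rewrite ?mul1r ?mulN1r; by [left | right].
rewrite e2 e3; case: (cube_eq1 w_cubic (esym e1)) => ->; rewrite ?expr1n ?mul1r ?w4;
  by [left | right; left | right; right].
Qed.

Lemma cls_equivE (R : realType) (k k' : cls R[i]) :
  cls_equiv k k' <-> cls_equiv_at (omega R) k k'.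
Proof. by case: k k' => [||a|a b] [||a'|a' b']. Qed.

Theorem corollary4p2 (R : realType) :
  (forall (V : vectType R[i]) (mul : V -> V -> V),
     \dim (fullv : {vspace V}) = 4%N ->
     leibniz_algebra mul -> cyclic_algebra mul ->
     exists k : cls R[i], alg_iso mul (model_mul (cls_vec k))) /\
  (forall k k' : cls R[i],
     alg_iso (model_mul (cls_vec k)) (model_mul (cls_vec k')) <->
     cls_equiv k k').
Proof.
split=> [V mul dimV [bil leib] [x genx] | k k'].
  have := coord_row_lpow4_00 bil leib genx dimV.
  move=> /cls_vec_normal_form [k [s s0 ek]]; exists k; rewrite ek.
  exact: cyclic_iso_model_rescale.
rewrite cls_equivE cls_equiv_at_rescale ?omega_cubic //.
exact: model_iso_rescale (cls_vec00 k).
Qed.
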